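(* Let $G$ be a finite simple graph, and let $C_1$, $C_2$, $C_3$ be nonempty connected induced subgraphs of $G$ such that for every $i\neq j$ the distance in $G$ between $C_i$ and $C_j$ is at least $2$. Let $k=\min\{\mathrm{lmw}(C_1),\mathrm{lmw}(C_2),\mathrm{lmw}(C_3)\}$. Suppose that for each pair $\{i,j\}\subseteq\{1,2,3\}$ with $i\neq j$, letting $l$ be the third index, there exists a path $P_{i,j}$ in $G$ from a vertex of $C_i$ to a vertex of $C_j$ that does not intersect the closed neighborhood $N_G[V(C_l)]$. Then $\mathrm{lmw}(G)>k$.
   Context: All graphs are finite and simple. For $S\subseteq V(G)$, $N_G[S]=\bigcup_{v\in S}(N_G(v)\cup\{v\})$. The distance between two subgraphs $H,H'$ of $G$ is the minimum distance in $G$ between a vertex of $H$ and a vertex of $H'$. For disjoint $S,T\subseteq V(G)$, $G[S,T]$ denotes the bipartite graph on $S\cup T$ whose edges are exactly the edges of $G$ with one endpoint in $S$ and the other in $T$. $\mathrm{mim}(H)$ is the maximum number of edges in an induced matching of $H$. A linear layout of an $n$-vertex graph $G$ is a bijection $\sigma:V(G)\to\{1,\dots,n\}$; write $v_i=\sigma^{-1}(i)$ and $V_i^\sigma=\{v_1,\dots,v_i\}$, $\overline{V_i^\sigma}=V(G)\setminus V_i^\sigma$. The MIM-width of $G$ under $\sigma$ is $\mathrm{mw}(\sigma,G)=\max_{1\le i<n}\mathrm{mim}(G[V_i^\sigma,\overline{V_i^\sigma}])$ (equal to $0$ if $n\le 1$). The linear MIM-width $\mathrm{lmw}(G)$ is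 the minimum of $\mathrm{mw}(\sigma,G)$ over all linear layouts $\sigma$ of $G$. *)

(* A finite simple graph is a symmetric irreflexive relation
   e on a finType T; an induced subgraph is given by its vertex set. *)
From mathcomp Require Import all_boot.
Set Implicit Arguments. Unset Strict Implicit. Unset Printing Implicit Defensive.

Section Graph.
Variables (T : finType) (e : rel T).

Definition closed_nbhd (S : {set T}) : {set T} :=
  [set v | (v \in S) || [exists u in S, e u v]].

Definition connected_in (S : {set T}) : Prop :=
  forall x y, x \in S -> y \in S ->
    connect [rel u v | [&& e u v, u \in S & v \in S]] x y.

Definition dist_ge2 (S1 S2 : {set T}) : Prop :=
  [disjoint S1 & S2] /\ forall x y, x \in S1 -> y \in S2 -> ~~ e x y.

Definition induced_matching (A B : {set T}) (M : {set T * T}) : bool :=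
  [forall p in M, [&& p.1 \in A, p.2 \in B & e p.1 p.2]] &&
  [forall p in M, forall q in M, (p != q) ==>
     [&& p.1 != q.1, p.2 != q.2, ~~ e p.1 q.2 & ~~ e q.1 p.2]].

Definition mim (A B : {set T}) : nat :=
  \max_(M : {set T * T} | induced_matching A B M) #|M|.

Definition mw (s : seq T) : nat :=
  \max_(1 <= i < size s) mim [set x in take i s] [set x in drop i s].

Definition layout (S : {set T}) (t : #|S|.-tuple T) : bool :=
  uniq t && all (fun x => x \in S) t.

(* linear MIM-width of G[S]; the initial value #|S| is an upper bound on
   mw of any layout and layouts always exist, so this is the true minimum *)
Definition lmw (S : {set T}) : nat :=
  \big[minn/#|S|]_(t : #|S|.-tuple T | @layout S t) mw t.

End Graph.

From mathcomp Require Import all_boot zify.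
Set Implicit Arguments. Unset Strict Implicit. Unset Printing Implicit Defensive.

(* Fix a linear layout of G and let k be the minimum of the lmw(C_i).  Restricting
   the layout to C_i yields a layout of C_i, so some cut of G's layout carries an
   induced matching of size >= k inside C_i.  Take the C_i whose cut is in the
   middle, say C_2.  The other two components lie on opposite sides of that cut
   (C_1 reaches left of it and C_3 right of it), and they are joined by P_{1,3},
   so C_1 u P_{1,3} u C_3 is a connected set avoiding N[C_2] with vertices on
   both sides: one of its edges crosses the cut and extends the matching inside
   C_2 to an induced matching of size k + 1.  For k = 0 it suffices that some
   edge of P_{1,2} crosses a cut. *)

Lemma path_crossing (T : Type) (r : rel T) (L : pred T) x p :
  path r x p -> L x -> ~~ L (last x p) -> exists u v, [/\ r u v, L u & ~~ L v].
Proof.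
elim: p x => [|y p IH] x /=; first by move=> _ ->.
case/andP=> rxy ryp Lx; case Ly: (L y); first exact: IH.
by exists x, y; rewrite Ly.
Qed.

Lemma connect_crossing (T : finType) (r : rel T) (L : pred T) x y :
  connect r x y -> L x -> ~~ L y -> exists u v, [/\ r u v, L u & ~~ L v].
Proof. by case/connectP=> p rp ->; apply: path_crossing. Qed.

Lemma bigmax_witness (I : eqType) (r : seq I) (P : pred I) (F : I -> nat) k :
  0 < k -> k <= \max_(i <- r | P i) F i -> exists2 i, (i \in r) && P i & k <= F i.
Proof.
move=> k_gt0 le_k_max.
have: has (fun i => P i && (k <= F i)) r.
  apply: contraLR le_k_max => /hasPn small; rewrite -ltnNge -(prednK k_gt0) ltnS.
  apply/bigmax_leqP_seq => i ri Pi; rewrite -ltnS prednK // ltnNge.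
  by move: (small i ri); rewrite Pi.
by case/hasP=> i ri /andP[Pi le_k]; exists i; rewrite ?ri.
Qed.

Lemma bigminn_le_seq (I : eqType) (r : seq I) (P : pred I) (F : I -> nat) x i :
  i \in r -> P i -> \big[minn/x]_(j <- r | P j) F j <= F i.
Proof.
elim: r => // j r IH; rewrite inE big_cons => /predU1P[<- -> | ir Pi]; first exact: geq_minl.
by case: ifP => _; [apply: leq_trans (geq_minr _ _) _ |]; apply: IH.
Qed.

Lemma filter_cut (T : Type) (P : pred T) (s : seq T) j : j <= size (filter P s) ->
  exists i, take j (filter P s) = filter P (take i s) /\
            drop j (filter P s) = filter P (drop i s).
Proof.
elim: s j => [|x s IH] [|j] le_j; try by exists 0; rewrite ?take0 ?drop0.
move: le_j; rewrite /=; case Px: (P x) => /= le_j.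
- by have [i [-> ->]] := IH j le_j; exists i.+1; rewrite /= Px.
- by have [i [-> ->]] := IH j.+1 le_j; exists i.+1; rewrite /= Px.
Qed.

Lemma mem_drop_index (T : eqType) (s : seq T) i x : uniq s -> x \in s ->
  (x \in drop i s) = (i <= index x s).
Proof.
move=> s_uniq xs; rewrite leqNgt -in_take //.
move: s_uniq xs; rewrite -{1 2}(cat_take_drop i s) cat_uniq mem_cat.
case/and3P=> _ /hasPn disj _ /orP[xl|xr]; last by rewrite xr (negbTE (disj x xr)).
by rewrite xl; apply/negP => /disj; rewrite xl.
Qed.

Section Graph.
Variables (T : finType) (e : rel T).
Hypothesis e_sym : symmetric e.

Lemma dist_ge2_sym (X Y : {set T}) : dist_ge2 e X Y -> dist_ge2 e Y X.
Proof.
case=> XY Xe; split=> [|x y xY yX]; first by rewrite disjoint_sym.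
by rewrite /= e_sym Xe.
Qed.

Lemma dist_ge2_disjoint_nbhd (X Y : {set T}) :
  dist_ge2 e X Y -> [disjoint X & closed_nbhd e Y].
Proof.
case=> XY Xe; rewrite disjoints_subset; apply/subsetP => v vX.
rewrite !inE negb_or (disjointFr XY vX) /=; apply/exists_inPn => w wY.
by rewrite /= e_sym Xe.
Qed.

Definition induced_rel (S : {set T}) : rel T := [rel u v | [&& e u v, u \in S & v \in S]].
Arguments induced_rel S /.

Lemma induced_rel_sym (S : {set T}) : symmetric (induced_rel S).
Proof. by move=> u v; rewrite /= e_sym [(u \in S) && _]andbC. Qed.

Lemma connect_induced_sub (S S' : {set T}) x y : S \subset S' ->
  connect (induced_rel S) x y -> connect (induced_rel S') x y.
Proof.
move=> /subsetP sSS'; apply: connect_sub => u v /and3P[euv uS vS].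
by apply: connect1; rewrite /= euv !sSS'.
Qed.

Lemma connected_inU (S1 S2 : {set T}) z :
  connected_in e S1 -> connected_in e S2 -> z \in S1 -> z \in S2 ->
  connected_in e (S1 :|: S2).
Proof.
move=> con1 con2 z1 z2 a b.
have lift1 x y := @connect_induced_sub _ _ x y (subsetUl S1 S2).
have lift2 x y := @connect_induced_sub _ _ x y (subsetUr S1 S2).
rewrite !inE => /orP[a1|a2] /orP[b1|b2]; change (connect (induced_rel (S1 :|: S2)) a b).
- exact: lift1 _ _ (con1 a b a1 b1).
- exact: connect_trans (lift1 _ _ (con1 a z a1 z1)) (lift2 _ _ (con2 z b z2 b2)).
- exact: connect_trans (lift2 _ _ (con2 a z a2 z2)) (lift1 _ _ (con1 z b z1 b1)).
- exact: lift2 _ _ (con2 a b a2 b2).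
Qed.

Lemma connected_in_path x p : path e x p -> connected_in e [set v in x :: p].
Proof.
move=> px.
have ipx : path (induced_rel [set v in x :: p]) x p.
  apply: (sub_in_path (P := fun v => v \in x :: p)) px; last exact/allP.
  by move=> u v up vp euv; rewrite /= euv !in_set; apply/and3P.
move=> a b; rewrite !inE => ap bp.
apply: (connect_trans (y := x)); last exact: path_connect ipx b bp.
by rewrite (sym_connect_sym (@induced_rel_sym _)); apply: path_connect ipx a ap.
Qed.

Definition avoiding_path (X Z Y : {set T}) : Prop :=
  exists x y (p : seq T), [/\ x \in X, y \in Z, path e x p && uniq (x :: p),
    last x p = y & all (fun v => v \notin closed_nbhd e Y) (x :: p)].

Lemma bridge_avoiding (X Y Z : {set T}) :
  connected_in e X -> connected_in e Z -> dist_ge2 e X Y -> dist_ge2 e Z Y ->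
  avoiding_path X Z Y ->
  exists D : {set T},
    [/\ X \subset D, Z \subset D, connected_in e D & [disjoint D & closed_nbhd e Y]].
Proof.
move=> conX conZ dXY dZY [x [y [p [xX yZ /andP[px _] lxy pN]]]]; subst y.
exists (X :|: [set v in x :: p] :|: Z); split.
- by rewrite -setUA subsetUl.
- exact: subsetUr.
- apply: (connected_inU (z := last x p)) => //; last by rewrite in_setU in_set mem_last orbT.
  by apply: (connected_inU (z := x)) (connected_in_path px) _ _; rewrite // in_set mem_head.
- rewrite disjoints_subset; apply/subsetP => v; rewrite !in_setU inE.
  case/orP=> [/orP[vX|vp]|vZ]; rewrite inE.
  + by rewrite (disjointFr (dist_ge2_disjoint_nbhd dXY) vX).
  + exact: (allP pN).
  + by rewrite (disjointFr (dist_ge2_disjoint_nbhd dZY) vZ).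
Qed.

Lemma induced_matching_sub_setX (A B : {set T}) M :
  induced_matching e A B M -> M \subset setX A B.
Proof.
by case/andP=> /forall_inP edgesM _; apply/subsetP => q /edgesM /and3P[qA qB _]; rewrite inE qA.
Qed.

Lemma induced_matching_mono (A B A' B' : {set T}) M :
  A \subset A' -> B \subset B' -> induced_matching e A B M -> induced_matching e A' B' M.
Proof.
move=> /subsetP sAA' /subsetP sBB' /andP[/forall_inP edgesM sepM]; apply/andP; split=> //.
by apply/forall_inP => q /edgesM /and3P[qA qB ->]; rewrite sAA' ?sBB'.
Qed.

Lemma induced_matching_setU1 (A B Y : {set T}) M u v :
  induced_matching e A B M -> M \subset setX Y Y -> u \in A -> v \in B -> e u v ->
  u \notin closed_nbhd e Y -> v \notin closed_nbhd e Y ->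
  induced_matching e A B ((u, v) |: M).
Proof.
move=> /andP[/forall_inP edgesM /forall_inP sepM] /subsetP MY uA vB euv.
rewrite !inE !negb_or => /andP[uY /exists_inPn uNY] /andP[vY /exists_inPn vNY].
have far q : q \in M -> [&& u != q.1, v != q.2, ~~ e u q.2 & ~~ e q.1 v].
  move/MY; rewrite inE => /andP[q1Y q2Y].
  have uq1 : u != q.1 by apply: contraNneq uY => ->.
  have vq2 : v != q.2 by apply: contraNneq vY => ->.
  by rewrite uq1 vq2 e_sym uNY // vNY.
apply/andP; split; apply/forall_inP => p; rewrite in_setU1 => /predU1P[-> | pM].
- by rewrite /= uA vB euv.
- exact: edgesM.
- apply/forall_inP => q; rewrite in_setU1 => /predU1P[-> | qM]; first by rewrite eqxx.
  by apply/implyP => _; apply: far.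
- apply/forall_inP => q; rewrite in_setU1 => /predU1P[-> | qM].
    apply/implyP => _; case/and4P: (far p pM) => *.
    by apply/and4P; split; rewrite // eq_sym.
  exact: (forall_inP (sepM p pM)).
Qed.

Lemma mim_gt_extend (A B Y : {set T}) M u v :
  induced_matching e A B M -> M \subset setX Y Y -> u \in A -> v \in B -> e u v ->
  u \notin closed_nbhd e Y -> v \notin closed_nbhd e Y -> #|M| < mim e A B.
Proof.
move=> IM MY uA vB euv uN vN.
have uvM : (u, v) \notin M.
  by apply: contra uN => /(subsetP MY); rewrite !inE => /andP[->].
apply: leq_trans (leq_bigmax_cond _ (induced_matching_setU1 IM MY uA vB euv uN vN)).
by rewrite cardsU1 uvM.
Qed.

Lemma mim_cut_le_mw (t : seq T) i : 0 < i < size t ->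
  mim e [set x in take i t] [set x in drop i t] <= mw e t.
Proof.
by move=> /andP[i_gt0 i_lt]; apply: (leq_bigmax_seq i); rewrite ?mem_index_iota ?i_gt0.
Qed.

Lemma lmw_le_mw (S : {set T}) (t : #|S|.-tuple T) : @layout T S t -> lmw e S <= mw e t.
Proof. by move=> lay_t; apply: bigminn_le_seq; rewrite ?mem_index_enum. Qed.

Lemma lmw_le_card (S : {set T}) : lmw e S <= #|S|.
Proof. by rewrite /lmw; elim/big_rec: _ => // t m _; apply: leq_trans (geq_minr _ _). Qed.

Lemma lmw_gt (S : {set T}) k : k < #|S| ->
  (forall t : #|S|.-tuple T, @layout T S t -> k < mw e t) -> k < lmw e S.
Proof.
by move=> k_lt_S k_lt_mw; rewrite /lmw; elim/big_ind: _ => // m n; rewrite leq_min => ->.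
Qed.

Lemma lmw_lt_card_proper (S S' : {set T}) : S \proper S' -> lmw e S < #|S'|.
Proof. by move/proper_card; apply: leq_ltn_trans (lmw_le_card S). Qed.

Section FullLayout.
Variable t : seq T.
Hypotheses (t_uniq : uniq t) (t_full : forall v, v \in t).

Definition cut_matching (C : {set T}) (i : nat) (M : {set T * T}) : bool :=
  induced_matching e [set x in take i t] [set x in drop i t] M && (M \subset setX C C).

Lemma mw_gt_crossing (D Y : {set T}) i M l r :
  induced_matching e [set x in take i t] [set x in drop i t] M -> M \subset setX Y Y ->
  connected_in e D -> [disjoint D & closed_nbhd e Y] ->
  l \in D -> r \in D -> index l t < i <= index r t -> #|M| < mw e t.
Proof.
move=> IM MY Dcon DY lD rD /andP[li ir].
have ri : ~~ (index r t < i) by rewrite -leqNgt.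
have [u [v [/and3P[euv uD vD] ui iv]]] :=
  connect_crossing (L := fun w => index w t < i) (Dcon l r lD rD) li ri.
have i_range : 0 < i < size t.
  by rewrite (leq_ltn_trans (leq0n _) li) (leq_ltn_trans ir) ?index_mem.
apply: leq_trans (mim_cut_le_mw i_range); apply: (mim_gt_extend IM MY _ _ euv).
- by rewrite inE in_take.
- by rewrite inE mem_drop_index // leqNgt.
- by rewrite (disjointFr DY uD).
- by rewrite (disjointFr DY vD).
Qed.

Lemma mw_gt0 (D : {set T}) a b :
  connected_in e D -> a \in D -> b \in D -> a != b -> 0 < mw e t.
Proof.
wlog lt_ab : a b / index a t < index b t.
  move=> wlog_ab Dcon aD bD ab.
  have : index a t != index b t.
    by apply: contra ab => /eqP/(index_inj _ (t_full a) (t_full b)) ->.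
  rewrite neq_ltn => /orP[] lt; first exact: (wlog_ab a b).
  by apply: (wlog_ab b a) => //; rewrite eq_sym.
move=> Dcon aD bD _; rewrite -(@cards0 (T * T)%type).
apply: (mw_gt_crossing (Y := set0) (i := (index a t).+1) _ (sub0set _) Dcon _ aD bD).
- by apply/andP; split; apply/forall_inP => q; rewrite in_set0.
- rewrite disjoints_subset; apply/subsetP => v _; rewrite !inE.
  by apply/exists_inPn => w; rewrite in_set0.
- by rewrite ltnSn.
Qed.

Lemma mw_gt0_path x p : path e x p -> x != last x p -> 0 < mw e t.
Proof.
by move=> px; apply: mw_gt0 (connected_in_path px) _ _; rewrite in_set ?mem_head ?mem_last.
Qed.

Lemma cut_matching_sides (C : {set T}) i M : cut_matching C i M -> M != set0 ->
  exists l r, [/\ l \in C, r \in C, index l t < i & i <= index r t].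
Proof.
case/andP=> /induced_matching_sub_setX /subsetP Mcut /subsetP MC /set0Pn[q qM].
move: (Mcut q qM) (MC q qM); rewrite !inE in_take // mem_drop_index //.
by case/andP=> li ir /andP[lC rC]; exists q.1, q.2.
Qed.

Lemma mw_gt_middle (X Y Z : {set T}) iX iY iZ MX MY MZ :
  connected_in e X -> connected_in e Z -> dist_ge2 e X Y -> dist_ge2 e Z Y ->
  avoiding_path X Z Y ->
  cut_matching X iX MX -> MX != set0 -> cut_matching Y iY MY ->
  cut_matching Z iZ MZ -> MZ != set0 ->
  (iX <= iY <= iZ) || (iZ <= iY <= iX) -> #|MY| < mw e t.
Proof.
move=> conX conZ dXY dZY /(bridge_avoiding conX conZ dXY dZY)[D [XD ZD Dcon DY]].
move=> {conX conZ dXY dZY} cutX MX0 /andP[IMY MYY] cutZ MZ0.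
wlog /andP[leXY leYZ] : X Z iX iZ MX MZ XD ZD cutX MX0 cutZ MZ0 / iX <= iY <= iZ.
  move=> wlog_ord /orP[] ord.
    by apply: (wlog_ord X Z iX iZ MX MZ); rewrite ?ord.
  by apply: (wlog_ord Z X iZ iX MZ MX); rewrite ?ord.
move=> _; move/subsetP: XD => XD; move/subsetP: ZD => ZD.
have [l [_ [lX _ li _]]] := cut_matching_sides cutX MX0.
have [_ [r [_ rZ _ ir]]] := cut_matching_sides cutZ MZ0.
apply: (mw_gt_crossing IMY MYY Dcon DY (XD l lX) (ZD r rZ)).
by rewrite (leq_trans li leXY) (leq_trans leYZ ir).
Qed.

Lemma cut_matching_of_lmw (C : {set T}) k : 0 < k -> k <= lmw e C ->
  exists i M, [/\ cut_matching C i M, M != set0 & k <= #|M|].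
Proof.
move=> k_gt0 le_k.
pose f := filter [in C] t.
have f_size : size f == #|C|.
  rewrite -(card_uniqP (filter_uniq _ t_uniq)); apply/eqP/eq_card => v.
  by rewrite mem_filter t_full andbT.
have f_layout : @layout T C (Tuple f_size) by rewrite /layout filter_uniq //= filter_all.
have [j /andP[] ] := bigmax_witness k_gt0 (leq_trans le_k (lmw_le_mw f_layout)).
rewrite mem_index_iota => /andP[_ lt_j] _ le_k_mim.
have [M /andP[_ IM] le_k_M] := bigmax_witness k_gt0 le_k_mim.
have [i [take_f drop_f]] := filter_cut (P := [in C]) (s := t) (ltnW lt_j).
have fC s : [set x in filter [in C] s] \subset C.
  by apply/subsetP => v; rewrite inE mem_filter => /andP[].
have fs s : [set x in filter [in C] s] \subset [set x in s].
  by apply/subsetP => v; rewrite !inE mem_filter => /andP[].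
move: IM; rewrite /= take_f drop_f => IM.
exists i, M; split=> //; last by rewrite -card_gt0 (leq_trans k_gt0).
apply/andP; split; first exact: induced_matching_mono (fs _) (fs _) IM.
exact: subset_trans (induced_matching_sub_setX IM) (setXS (fC _) (fC _)).
Qed.

End FullLayout.

Lemma mem_layout_setT (t : #|[set: T]|.-tuple T) : @layout T [set: T] t -> forall v, v \in t.
Proof.
case/andP=> /card_uniqP card_t _ v.
have /subset_cardP t_eq : #|t| = #|predT : pred T| by rewrite card_t size_tuple cardsT.
by rewrite (t_eq (subset_predT _)).
Qed.

End Graph.

Theorem lemma3 (T : finType) (e : rel T)
  (e_sym : symmetric e) (e_irr : irreflexive e)
  (C1 C2 C3 : {set T})
  (ne1 : C1 != set0) (ne2 : C2 != set0) (ne3 : C3 != set0)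
  (con1 : connected_in e C1) (con2 : connected_in e C2) (con3 : connected_in e C3)
  (d12 : dist_ge2 e C1 C2) (d13 : dist_ge2 e C1 C3) (d23 : dist_ge2 e C2 C3)
  (P12 : exists x y (p : seq T), [/\ x \in C1, y \in C2, path e x p && uniq (x :: p),
            last x p = y &
            all (fun v => v \notin closed_nbhd e C3) (x :: p)])
  (P13 : exists x y (p : seq T), [/\ x \in C1, y \in C3, path e x p && uniq (x :: p),
            last x p = y &
            all (fun v => v \notin closed_nbhd e C2) (x :: p)])
  (P23 : exists x y (p : seq T), [/\ x \in C2, y \in C3, path e x p && uniq (x :: p),
            last x p = y &
            all (fun v => v \notin closed_nbhd e C1) (x :: p)]) :
  minn (lmw e C1) (minn (lmw e C2) (lmw e C3)) < lmw e [set: T].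
Proof.
set k := minn _ _.
have k1 : k <= lmw e C1 := geq_minl _ _.
have k2 : k <= lmw e C2 := leq_trans (geq_minr _ _) (geq_minl _ _).
have k3 : k <= lmw e C3 := leq_trans (geq_minr _ _) (geq_minr _ _).
apply: lmw_gt => [|t lay_t].
  apply: leq_ltn_trans k1 (lmw_lt_card_proper e _); rewrite properT.
  have /set0Pn[b bC2] := ne2; apply/eqP => C1T.
  by move: (disjointFl d12.1 bC2); rewrite C1T inE.
have [t_uniq t_full] := (proj1 (andP lay_t), mem_layout_setT lay_t).
have [-> | k_gt0] := posnP k.
  have [x [y [p [xC1 yC2 /andP[px _] lxy _]]]] := P12; subst y.
  apply: (mw_gt0_path e_sym t_uniq t_full px).
  by apply: contraTneq yC2 => <-; rewrite (disjointFr d12.1).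
have [i1 [M1 [cut1 M1_ne0 kM1]]] := cut_matching_of_lmw t_uniq t_full k_gt0 k1.
have [i2 [M2 [cut2 M2_ne0 kM2]]] := cut_matching_of_lmw t_uniq t_full k_gt0 k2.
have [i3 [M3 [cut3 M3_ne0 kM3]]] := cut_matching_of_lmw t_uniq t_full k_gt0 k3.
have d21 := dist_ge2_sym e_sym d12; have d31 := dist_ge2_sym e_sym d13.
have d32 := dist_ge2_sym e_sym d23.
have : [|| (i1 <= i2 <= i3) || (i3 <= i2 <= i1), (i2 <= i1 <= i3) || (i3 <= i1 <= i2)
         | (i1 <= i3 <= i2) || (i2 <= i3 <= i1)] by lia.
case/or3P => ord.
- exact: leq_ltn_trans kM2
    (mw_gt_middle e_sym t_uniq t_full con1 con3 d12 d32 P13 cut1 M1_ne0 cut2 cut3 M3_ne0 ord).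
- exact: leq_ltn_trans kM1
    (mw_gt_middle e_sym t_uniq t_full con2 con3 d21 d31 P23 cut2 M2_ne0 cut1 cut3 M3_ne0 ord).
- exact: leq_ltn_trans kM3
    (mw_gt_middle e_sym t_uniq t_full con1 con2 d13 d23 P12 cut1 M1_ne0 cut3 cut2 M2_ne0 ord).
Qed.
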